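(* Let $n\ge 2$ and let $A\in\mathrm{GL}(n,2)$ be arbitrary, with columns $\mathbf{a}_1,\dots,\mathbf{a}_n\in\mathbb{F}_2^n$. Then there exist two probability distributions $p,q\in\Delta(\mathbb{F}_2^n)$ such that $\widehat p(\mathbf{a}_i)=\widehat q(\mathbf{a}_i)$ for all $i\in\{1,\dots,n\}$, but $p(\mathbf{0})\neq q(\mathbf{0})$.
   Context: $\mathbb{F}_2$ is the field with two elements; $\mathrm{GL}(n,2)$ is the group of invertible $n\times n$ matrices over $\mathbb{F}_2$. $\Delta(\mathbb{F}_2^n)$ denotes the set of probability distributions on $\mathbb{F}_2^n$. For $\mathbf{u},\mathbf{s}\in\mathbb{F}_2^n$, $\mathbf{u}\cdot\mathbf{s}=\sum_j u_js_j \pmod 2$. For $p\in\Delta(\mathbb{F}_2^n)$ the Walsh transform is $\widehat p(\mathbf{u})=\sum_{\mathbf{s}\in\mathbb{F}_2^n}(-1)^{\mathbf{u}\cdot\mathbf{s}}p(\mathbf{s})$. (Physical interpretation: $p$ is the syndrome distribution of a state relative to an $n$-qubit stabilizer state, $p(\mathbf{0})$ is the fidelity, and $\widehat p(\mathbf{a}_i)$ are the expectations of the generators in the gauge $A$.) *)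

From HB Require Import structures.
From mathcomp Require Import all_boot all_order all_algebra.
From mathcomp Require Import reals.
Set Implicit Arguments. Unset Strict Implicit. Unset Printing Implicit Defensive.
Import Order.TTheory GRing.Theory Num.Theory.
Local Open Scope ring_scope.

Definition dotF2 (n : nat) (u s : 'rV['F_2]_n) : 'F_2 :=
  \sum_(j < n) u 0 j * s 0 j.

Definition sgn_dot (R : realType) (n : nat) (u s : 'rV['F_2]_n) : R :=
  if dotF2 u s == 0 then 1 else -1.

Definition is_distribution (R : realType) (n : nat) (p : 'rV['F_2]_n -> R) : Prop :=
  (forall s, 0 <= p s) /\ \sum_(s : 'rV['F_2]_n) p s = 1.

Definition walsh (R : realType) (n : nat) (p : 'rV['F_2]_n -> R) (u : 'rV['F_2]_n) : R :=
  \sum_(s : 'rV['F_2]_n) sgn_dot R u s * p s.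

From HB Require Import structures.
From mathcomp Require Import all_boot all_order all_algebra.
From mathcomp Require Import reals.
Import Order.TTheory GRing.Theory Num.Theory.
Set Implicit Arguments. Unset Strict Implicit.
Local Open Scope ring_scope.

(* Choose s with a_i . s = 1 for every column a_i of A (possible as A is
   invertible).  Then (-1)^(u . (s + t)) = - (-1)^(u . t) for each u = a_i, so
   the uniform distribution on {t, s + t} has vanishing Walsh transform at all
   the a_i, whatever t is.  Taking t = 0 gives positive fidelity, while for
   n >= 2 some t avoids both 0 and -s, which gives fidelity 0. *)

Lemma exists_neq2 (T : finType) (a b : T) :
  (2 < #|T|)%N -> exists t, t != a /\ t != b.
Proof.
move=> T_gt2; have : (0 < #|~: [set a; b]|)%N.
  by rewrite cardsCs setCK cards2 subn_gt0 (leq_ltn_trans _ T_gt2) // ltnS leq_b1.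
case/card_gt0P => t; rewrite !inE negb_or => /andP[ta tb].
by exists t.
Qed.

Lemma card_rowF2 (n : nat) : #|{: 'rV['F_2]_n}| = (2 ^ n)%N.
Proof. by rewrite card_mx card_Fp // mul1n. Qed.

Lemma dotF2_colT (n : nat) (A : 'M['F_2]_n) (s : 'rV['F_2]_n) (i : 'I_n) :
  dotF2 (col i A)^T s = (s *m A) 0 i.
Proof. by rewrite /dotF2 mxE; apply: eq_bigr => j _; rewrite !mxE mulrC. Qed.

Lemma exists_dotF2_cols_eq1 (n : nat) (A : 'M['F_2]_n) :
  A \in unitmx -> exists s, forall i : 'I_n, dotF2 (col i A)^T s = 1.
Proof.
move=> A_unit; exists (const_mx 1 *m invmx A) => i.
by rewrite dotF2_colT mulmxKV // mxE.
Qed.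

Lemma dotF2D (n : nat) (u s t : 'rV['F_2]_n) :
  dotF2 u (s + t) = dotF2 u s + dotF2 u t.
Proof.
by rewrite /dotF2 -big_split; apply: eq_bigr => j _; rewrite mxE mulrDr.
Qed.

Lemma sgn_dot_shift (R : realType) (n : nat) (u s t : 'rV['F_2]_n) :
  dotF2 u s = 1 -> sgn_dot R u (s + t) = - sgn_dot R u t.
Proof.
rewrite /sgn_dot dotF2D => ->.
by case: (dotF2 u t) => [[|[|k]] //] ?; rewrite ?opprK.
Qed.

Section PairDistribution.

Variables (R : realType) (n : nat).

Definition pair_distr (a b : 'rV['F_2]_n) (s : 'rV['F_2]_n) : R :=
  ((s == a)%:R + (s == b)%:R) / 2.

Lemma sum_indicator (F : 'rV['F_2]_n -> R) (a : 'rV['F_2]_n) :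
  \sum_s F s * (s == a)%:R = F a.
Proof.
rewrite (bigD1 a) //= eqxx mulr1 big1 ?addr0 // => s /negbTE ->.
by rewrite mulr0.
Qed.

Lemma pair_distr_is_distribution (a b : 'rV['F_2]_n) :
  is_distribution (pair_distr a b).
Proof.
split=> [s|]; first by rewrite divr_ge0 ?addr_ge0 ?ler0n.
rewrite -mulr_suml big_split /=.
have sum1 (c : 'rV['F_2]_n) : \sum_s (s == c)%:R = 1 :> R.
  by rewrite -[RHS](sum_indicator (fun=> 1) c); apply: eq_bigr => s _; rewrite mul1r.
by rewrite !sum1 -mulr2n divff ?pnatr_eq0.
Qed.

Lemma walsh_pair_distr (a b u : 'rV['F_2]_n) :
  walsh (pair_distr a b) u = (sgn_dot R u a + sgn_dot R u b) / 2.
Proof.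
rewrite /walsh; under eq_bigr do rewrite mulrA mulrDr.
by rewrite -mulr_suml big_split /= !sum_indicator.
Qed.

Lemma walsh_pair_distr_shift (s t u : 'rV['F_2]_n) :
  dotF2 u s = 1 -> walsh (pair_distr t (s + t)) u = 0.
Proof.
by move=> us1; rewrite walsh_pair_distr sgn_dot_shift // subrr mul0r.
Qed.

Lemma pair_distr_gt0 (a b : 'rV['F_2]_n) : 0 < pair_distr a b a.
Proof. by rewrite divr_gt0 // eqxx ltr_pwDl ?ler0n ?ltr01. Qed.

Lemma pair_distr_eq0 (a b s : 'rV['F_2]_n) :
  s != a -> s != b -> pair_distr a b s = 0.
Proof. by rewrite /pair_distr => /negbTE-> /negbTE->; rewrite addr0 mul0r. Qed.

End PairDistribution.

Theorem proposition1 (R : realType) (n : nat) (hn : (2 <= n)%N)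
  (A : 'M['F_2]_n) (hA : A \in unitmx) :
  exists p q : 'rV['F_2]_n -> R,
    [/\ is_distribution p, is_distribution q,
        (forall i : 'I_n, walsh p (col i A)^T = walsh q (col i A)^T)
      & p 0 <> q 0].
Proof.
have [s dot_s] := exists_dotF2_cols_eq1 hA.
have [t [t_neq0 t_neqNs]] : exists t, t != 0 /\ t != - s.
  apply: exists_neq2; rewrite card_rowF2.
  by rewrite (leq_trans _ (leq_pexp2l (isT : (0 < 2)%N) hn)).
exists (pair_distr R 0 (s + 0)), (pair_distr R t (s + t)); split.
- exact: pair_distr_is_distribution.
- exact: pair_distr_is_distribution.
- by move=> i; rewrite !walsh_pair_distr_shift.
have q0_eq0 : pair_distr R t (s + t) 0 = 0.
  by apply: pair_distr_eq0; rewrite eq_sym // addrC addr_eq0.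
by rewrite q0_eq0; apply/eqP; rewrite lt0r_neq0 ?pair_distr_gt0.
Qed.
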